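(* If a generalised binary matrix $\mathbf{Y}$ is minimally non-firm, then $i(\mathbf{Y})=br(\mathbf{Y})-1$.
   Context: A generalised binary matrix is a matrix with entries in $\{0,1,?\}$. For such $\mathbf{Y}$, $\mathrm{supp}(\mathbf{Y})=\{(i,j):y_{i,j}=1\}$. A submatrix indexed by $I\times J$ is obtained by deleting rows not in $I$ and columns not in $J$; it is proper if it omits at least one row or column. A rectangle of $\mathbf{Y}$ is a set $I\times J$ of positions containing no entry equal to $0$. An isolated set is a subset of $\mathrm{supp}(\mathbf{Y})$ no two distinct elements of which lie in a common rectangle; $i(\mathbf{Y})$ is the maximum size of an isolated set. $br(\mathbf{Y})$ is the minimum number of rectangles whose union contains $\mathrm{supp}(\mathbf{Y})$ ($?$ entries need not be covered). $\mathbf{Y}$ is minimally non-firm if $i(\mathbf{Y})<br(\mathbf{Y})$ and $i(\mathbf{Y}')=br(\mathbf{Y}')$ for every proper submatrix $\mathbf{Y}'$ of $\mathbf{Y}$. *)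

From mathcomp Require Import all_boot all_order.
From mathcomp Require Import all_algebra.

Set Implicit Arguments.
Unset Strict Implicit.
Unset Printing Implicit Defensive.

(* Entries of a generalised binary matrix: 0, 1, or ? *)
Inductive gentry := G0 | G1 | GQ.

Definition is_zero (e : gentry) : bool := if e is G0 then true else false.
Definition is_one (e : gentry) : bool := if e is G1 then true else false.

Section GenMat.
Variables (R C : finType).
Implicit Type Y : R -> C -> gentry.

Definition gsupp Y : {set R * C} := [set p | is_one (Y p.1 p.2)].

Definition is_rect Y (I : {set R}) (J : {set C}) : bool :=
  [forall i in I, forall j in J, ~~ is_zero (Y i j)].

Definition common_rect Y (p q : R * C) : bool :=
  [exists I : {set R}, exists J : {set C},
     [&& is_rect Y I J, p.1 \in I, p.2 \in J, q.1 \in I & q.2 \in J]].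

Definition isolated Y (S : {set R * C}) : bool :=
  (S \subset gsupp Y) &&
  [forall p in S, forall q in S, (p != q) ==> ~~ common_rect Y p q].

Definition inum Y : nat := \max_(S : {set R * C} | isolated Y S) #|S|.

Definition rect_cover Y (P : {set {set R} * {set C}}) : bool :=
  [forall r in P, is_rect Y r.1 r.2] &&
  [forall p in gsupp Y, exists r in P, (p.1 \in r.1) && (p.2 \in r.2)].

Definition covers_with Y (k : nat) : bool :=
  [exists P : {set {set R} * {set C}}, (#|P| == k) && rect_cover Y P].

Lemma covers_with_ex Y : exists k, covers_with Y k.
Proof.
exists #|[set ([set p.1], [set p.2]) | p in gsupp Y]|.
apply/existsP; exists [set ([set p.1], [set p.2]) | p in gsupp Y].
rewrite eqxx /=; apply/andP; split.
- apply/forallP => r; apply/implyP => Hr. have [p Hp ->] := imsetP Hr.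
  apply/forallP => i; apply/implyP; rewrite inE => /eqP ->.
  apply/forallP => j; apply/implyP; rewrite inE => /eqP ->.
  by move: Hp; rewrite inE; case: (Y p.1 p.2).
- apply/forallP => p; apply/implyP => Hp; apply/existsP.
  exists ([set p.1], [set p.2]).
  by rewrite imset_f //= !inE !eqxx.
Qed.

Definition brnum Y : nat := ex_minn (covers_with_ex Y).

Definition submat Y (I : {set R}) (J : {set C})
  : {i : R | i \in I} -> {j : C | j \in J} -> gentry :=
  fun i j => Y (val i) (val j).

End GenMat.
Arguments submat {R C} Y I J _ _.

Definition min_non_firm (R C : finType) (Y : R -> C -> gentry) : Prop :=
  inum Y < brnum Y /\
  forall (I : {set R}) (J : {set C}), (I != setT) || (J != setT) ->
    inum (submat Y I J) = brnum (submat Y I J).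

From mathcomp Require Import all_boot all_order all_algebra.

Set Implicit Arguments.
Unset Strict Implicit.
Unset Printing Implicit Defensive.

(* Since i(Y) < br(Y), supp(Y) is nonempty, so some row r exists; let Y' be Y
   with row r deleted.  An isolated set of Y' stays isolated in Y (a rectangle
   of Y restricts to one of Y'), and a rectangle cover of Y' together with the
   single rectangle {r} x {j | Y r j = 1} covers Y.  As Y' is proper, hence firm,
   br(Y) <= br(Y') + 1 = i(Y') + 1 <= i(Y) + 1. *)

Section GeneralisedMatrix.
Variables (R C : finType).
Implicit Type Y : R -> C -> gentry.

Lemma brnum_covers Y : covers_with Y (brnum Y).
Proof. by rewrite /brnum; case: ex_minnP. Qed.

Lemma brnum_leq_card Y P : rect_cover Y P -> brnum Y <= #|P|.
Proof.
move=> coverP; rewrite /brnum; case: ex_minnP => b _; apply.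
by apply/existsP; exists P; rewrite eqxx.
Qed.

Lemma card_isolated_leq_inum Y S : isolated Y S -> #|S| <= inum Y.
Proof. exact: (@leq_bigmax_cond _ _ (fun S : {set R * C} => #|S|)). Qed.

Lemma brnum_gsupp0 Y : gsupp Y = set0 -> brnum Y = 0.
Proof.
move=> supp0; apply/eqP; rewrite -leqn0.
have := @brnum_leq_card Y set0; rewrite cards0; apply.
by apply/andP; split; apply/forallP => x; rewrite ?supp0 inE.
Qed.

End GeneralisedMatrix.

Section Submatrix.
Variables (R C : finType) (Y : R -> C -> gentry) (I : {set R}) (J : {set C}).
Local Notation subpos := ({i | i \in I} * {j | j \in J})%type.
Local Notation subrect := ({set {i | i \in I}} * {set {j | j \in J}})%type.

Definition lift_pos (p : subpos) : R * C := (val p.1, val p.2).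

Definition lift_rect (r : subrect) : {set R} * {set C} :=
  ([set val i | i in r.1], [set val j | j in r.2]).

Lemma lift_pos_inj : injective lift_pos.
Proof. by move=> [a b] [c d] [/val_inj -> /val_inj ->]. Qed.

Lemma gsupp_lift (p : subpos) :
  (lift_pos p \in gsupp Y) = (p \in gsupp (submat Y I J)).
Proof. by rewrite !inE. Qed.

Lemma mem_lift_rect (p : subpos) (r : subrect) :
  (p.1 \in r.1) && (p.2 \in r.2) ->
  ((lift_pos p).1 \in (lift_rect r).1) && ((lift_pos p).2 \in (lift_rect r).2).
Proof. by case/andP => p1r p2r; rewrite /= !imset_f. Qed.

Lemma is_rect_lift (r : subrect) :
  is_rect (submat Y I J) r.1 r.2 -> is_rect Y (lift_rect r).1 (lift_rect r).2.
Proof.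
move=> /forall_inP rect; apply/forall_inP => _ /imsetP [i ri ->].
by apply/forall_inP => _ /imsetP [j rj ->]; apply: (forall_inP (rect i ri)).
Qed.

Lemma common_rect_restrict (p q : subpos) :
  common_rect Y (lift_pos p) (lift_pos q) -> common_rect (submat Y I J) p q.
Proof.
case/existsP => I0 /existsP [J0 /and5P [/forall_inP rect pI pJ qI qJ]].
apply/existsP; exists [set i | val i \in I0].
apply/existsP; exists [set j | val j \in J0].
rewrite !inE pI pJ qI qJ !andbT; apply/forall_inP => i; rewrite inE => iI0.
by apply/forall_inP => j; rewrite inE => jJ0; apply: (forall_inP (rect _ iI0)).
Qed.

Lemma isolated_lift S :
  isolated (submat Y I J) S -> isolated Y (lift_pos @: S).
Proof.
case/andP => /subsetP suppS /forall_inP iso; apply/andP; split.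
  by apply/subsetP => _ /imsetP [p pS ->]; rewrite gsupp_lift suppS.
apply/forall_inP => _ /imsetP [p pS ->]; apply/forall_inP => _ /imsetP [q qS ->].
apply/implyP; rewrite (inj_eq lift_pos_inj) => pq.
move/forall_inP: (iso p pS) => /(_ q qS); rewrite pq /=.
by apply: contraNN => /common_rect_restrict.
Qed.

Lemma inum_submat : inum (submat Y I J) <= inum Y.
Proof.
apply/bigmax_leqP => S isoS; rewrite -(card_imset _ lift_pos_inj).
exact/card_isolated_leq_inum/isolated_lift.
Qed.

End Submatrix.

Section RowDeletion.
Variables (R C : finType).
Implicit Type Y : R -> C -> gentry.

Lemma brnum_delete_row Y (r : R) :
  brnum Y <= (brnum (submat Y [set~ r] setT)).+1.
Proof.
have /existsP [P' /andP [/eqP <- /andP [/forall_inP rectP' /forall_inP coverP']]]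
  := brnum_covers (submat Y [set~ r] setT).
set row := ([set r], [set j | is_one (Y r j)]).
apply: (@leq_trans #|[set lift_rect s | s in P'] :|: [set row]|); last first.
  by rewrite (leq_trans (leq_card_setU _ _)) // cards1 addn1 ltnS leq_imset_card.
apply: brnum_leq_card; apply/andP; split.
  apply/forall_inP => s; rewrite !inE => /orP [/imsetP [s' s'P' ->] | /eqP ->].
    exact/is_rect_lift/rectP'.
  apply/forall_inP => _ /set1P ->; apply/forall_inP => j.
  by rewrite inE; case: (Y r j).
apply/forall_inP => -[i j] suppij; apply/existsP.
case: (eqVneq i r) suppij => [-> | ir] suppij.
  by exists row; rewrite !inE /= !eqxx orbT; move: suppij; rewrite inE.
have iI : i \in [set~ r] by rewrite !inE.
pose p : {i | i \in [set~ r]} * {j | j \in [set: C]} :=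
  (exist _ i iI, exist _ j (in_setT j)).
have /exists_inP [s sP' ps] : [exists s in P', (p.1 \in s.1) && (p.2 \in s.2)].
  by apply: coverP'; rewrite -gsupp_lift.
by exists (lift_rect s); rewrite inE imset_f //=; apply: (mem_lift_rect ps).
Qed.

Lemma min_non_firm_inum Y : min_non_firm Y -> inum Y = (brnum Y).-1.
Proof.
move=> [lt_inum_brnum firm_sub].
have [supp0 | [p _]] := set_0Vmem (gsupp Y).
  by move: lt_inum_brnum; rewrite brnum_gsupp0.
have proper : ([set~ p.1] != setT) || ([set: C] != setT).
  by apply/orP; left; apply/eqP => /setP /(_ p.1); rewrite !inE eqxx.
have := brnum_delete_row Y p.1.
rewrite -firm_sub // => le_brnum.
have le_inum := inum_submat Y [set~ p.1] setT.
suff -> : brnum Y = (inum Y).+1 by [].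
by apply/eqP; rewrite eqn_leq lt_inum_brnum andbT (leq_trans le_brnum).
Qed.

End RowDeletion.

Theorem lemma6 (m n : nat) (Y : 'M[gentry]_(m, n)) :
  min_non_firm (fun i j => Y i j) ->
  inum (fun i j => Y i j) = (brnum (fun i j => Y i j)).-1.
Proof. exact: min_non_firm_inum. Qed.
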